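(* Consider any instance $\mathcal{I}$ of the online volunteer notification problem (defined in the context) whose inter-activity time distribution $g$ has minimum discrete hazard rate $q$. Then the sparse notification (SN) policy is $\frac{1}{2-q}\left(1-\frac{1}{e}\right)$-competitive, i.e., for every such instance, $\mathbf{POL}_{\mathcal{I}} \ge \frac{1}{2-q}\left(1-\frac{1}{e}\right)\mathbf{LP}_{\mathcal{I}}$, where $\mathbf{POL}_{\mathcal{I}}$ is the expected number of tasks completed by the SN policy.
   Context: Online volunteer notification problem. An instance $\mathcal{I}$ consists of volunteers $[V]=\{1,\dots,V\}$, task types $[S]$, a horizon $T\in\mathbb{N}$, arrival probabilities $\lambda_{s,t}\ge 0$ ($s\in[S],t\in[T]$) with $\sum_{s=1}^S\lambda_{s,t}\le 1$, match probabilities $p_{v,s}\in[0,1]$, and a probability mass function $g$ on the positive integers (inter-activity time distribution) with CDF $G(\tau)=\sum_{i=1}^{\tau}g(i)$, $G(0)=0$. In each period $t$ at most one task arrives: of type $s$ with probability $\lambda_{s,t}$, and none with probability $\lambda_{0,t}:=1-\sum_{s}\lambda_{s,t}$, independently across periods. Each volunteer is at each time active or inactive; all are initially active. When a task arrives, the platform immediately and irrevocably notifies a subset of volunteers. Each notified active volunteer $v$ responds positively to a type-$s$ task independently with probability $p_{v,s}$; the task is completed iff at least one notified active volunteer responds. An active volunteer who is notified at time $t$ becomes inactive (regardless of her response) and becomes active again at time $t+Z$, where $Z$ is drawn independently with $\Pr(Z=\tau)=g(\tau)$; inactive volunteers ignore notifications and are unaffected by them. The platform knows $\lambda,p,g$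 but does not observe volunteers' states; an online policy decides whom to notify using only information available up to the current period. $\mathbf{POL}_{\mathcal{I}}$ denotes the expected number of completed tasks. Minimum discrete hazard rate (MDHR): $q=\min_{\tau\in\mathbb{N}}\frac{g(\tau)}{1-G(\tau-1)}$, with $\frac00:=1$. Benchmark: $\mathcal{P}$ is the set of $\mathbf{x}\in\mathbb{R}^{V\times S\times T}$ with $0\le x_{v,s,t}\le 1$ for all $v,s,t$ and $\sum_{\tau=1}^t\sum_{s=1}^S\lambda_{s,\tau}x_{v,s,\tau}(1-G(t-\tau))\le 1$ for all $v,t$. $\mathbf{LP}_{\mathcal{I}}=\max_{\mathbf{x}\in\mathcal{P}}\sum_{t=1}^T\sum_{s=1}^S\lambda_{s,t}\min\{\sum_{v=1}^V x_{v,s,t}p_{v,s},1\}$. A policy is $c$-competitive if $\mathbf{POL}_{\mathcal{I}}\ge c\,\mathbf{LP}_{\mathcal{I}}$ for every instance. Ex ante solution: $f(\mathbf{x})=\sum_{t=1}^T\sum_{s=1}^S\lambda_{s,t}\big(1-\prod_{v=1}^V(1-x_{v,s,t}p_{v,s})\big)$. Let $\mathbf{x}^*_{LP}$ be an optimal solution of $\mathbf{LP}_{\mathcal{I}}$; $\mathbf{x}^*_{AA}$ the output of the procedure (for some $m\in\mathbb{N}$): $\mathbf{x}^0=\mathbf{0}$, for $i=1,\dots,m$: $\mathbf{y}^i\in\arg\max_{\mathbf{x}\in\mathcal{P}}\langle \mathbf{x},\nabla f(\mathbf{x}^{i-1})\rangle$, $\mathbf{x}^i=\mathbf{x}^{i-1}+\mathbf{y}^i/m$,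 output $\mathbf{x}^m$; and $\mathbf{x}^*_{SQ}$ obtained sequentially for $v=1,\dots,V$: $(x^{SQ}_{v,s,t})_{s,t}$ is an optimal solution of $\max\sum_{t,s}\lambda_{s,t}\big(\prod_{u<v}(1-p_{u,s}x^{SQ}_{u,s,t})\big)p_{v,s}x_{v,s,t}$ subject to $0\le x_{v,s,t}\le1$ and $\sum_{\tau=1}^t\sum_s\lambda_{s,\tau}x_{v,s,\tau}(1-G(t-\tau))\le1$ for all $t$. Then $\mathbf{x}^*\in\arg\max_{\mathbf{x}\in\{\mathbf{x}^*_{LP},\mathbf{x}^*_{AA},\mathbf{x}^*_{SQ}\}}f(\mathbf{x})$. SN policy: Offline, for $v=1,\dots,V$ in order: set $r_{v,s,t}=p_{v,s}\prod_{u=1}^{v-1}(1-\tilde x_{u,s,t}p_{u,s})$, $J_{v,T+1}=0$; for $t=T$ down to $1$: for $s\in[S]$, $\tilde x_{v,s,t}=x^*_{v,s,t}\,\mathbb{I}\{r_{v,s,t}+\sum_{\tau=t+1}^T g(\tau-t)J_{v,\tau}\ge J_{v,t+1}\}$ (with $\tilde x_{v,0,t}=r_{v,0,t}=0$), and $J_{v,t}=\sum_{s=0}^S\lambda_{s,t}\big((1-\tilde x_{v,s,t})J_{v,t+1}+\tilde x_{v,s,t}(r_{v,s,t}+\sum_{\tau=t+1}^T g(\tau-t)J_{v,\tau})\big)$. Online: when a task of type $s$ arrives at time $t$, notify each volunteer $v$ independently with probability $\tilde x_{v,s,t}$. *)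

From HB Require Import structures.
From mathcomp Require Import all_boot all_order all_algebra.
From mathcomp Require Import all_classical all_reals all_analysis.
Set Implicit Arguments. Unset Strict Implicit. Unset Printing Implicit Defensive.
Import Order.TTheory GRing.Theory Num.Theory.
Local Open Scope ring_scope.

(* Conventions:
   - volunteers are indexed by naturals v in {0,..,V-1} (processed in this
     order, i.e. volunteer v+1 of the paper is v here);
   - task types are s : 'I_S (the "no task" type 0 of the paper is handled
     separately through lam0);
   - periods are naturals t in {1,..,T}, as in the paper;
   - a point of R^{V x S x T} is a function  nat -> 'I_S -> nat -> R,
     of which only the entries with v < V and 1 <= t <= T matter. *)

Section VolunteerNotification.
Variable R : realType.
Variables (V S T : nat).
Variable lam : 'I_S -> nat -> R.
Variable p : nat -> 'I_S -> R.
Variable g : nat -> R.             (* pmf on positive integers *)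

Definition vec := nat -> 'I_S -> nat -> R.

Definition Gc (k : nat) : R := \sum_(1 <= i < k.+1) g i.

Definition lam0 (t : nat) : R := 1 - \sum_(s < S) lam s t.

(* minimum discrete hazard rate, with 0/0 := 1 *)
Definition hazard (tau : nat) : R :=
  if 1 - Gc tau.-1 == 0 then 1 else g tau / (1 - Gc tau.-1).

Definition IsMDHR (q : R) : Prop :=
  (exists tau, (0 < tau)%N /\ hazard tau = q) /\
  (forall tau, (0 < tau)%N -> q <= hazard tau).

Definition feasv (y : 'I_S -> nat -> R) : Prop :=
  (forall s t, (1 <= t <= T)%N -> 0 <= y s t <= 1) /\
  (forall t, (1 <= t <= T)%N ->
     \sum_(1 <= tau < t.+1) \sum_(s < S) lam s tau * y s tau * (1 - Gc (t - tau)) <= 1).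

Definition inP (x : vec) : Prop := forall v, (v < V)%N -> feasv (x v).

Definition LPobj (x : vec) : R :=
  \sum_(1 <= t < T.+1) \sum_(s < S)
     lam s t * Num.min (\sum_(v < V) x v s t * p v s) 1.

Definition IsLPopt (x : vec) : Prop :=
  inP x /\ forall y, inP y -> LPobj y <= LPobj x.

Definition fobj (x : vec) : R :=
  \sum_(1 <= t < T.+1) \sum_(s < S)
     lam s t * (1 - \prod_(v < V) (1 - x v s t * p v s)).

Definition upd (x : vec) (v : nat) (s : 'I_S) (t : nat) (r : R) : vec :=
  fun v' s' t' => if [&& v' == v, s' == s & t' == t] then r else x v' s' t'.

Definition partial_f (x : vec) (v : nat) (s : 'I_S) (t : nat) : R :=
  derive1 (fun r => fobj (upd x v s t r)) (x v s t).

Definition inner_grad (y x : vec) : R :=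
  \sum_(v < V) \sum_(s < S) \sum_(1 <= t < T.+1) y v s t * partial_f x v s t.

(* x is an output of the (continuous greedy) procedure with parameter m *)
Definition IsAA (m : nat) (x : vec) : Prop :=
  exists (xs ys : nat -> vec),
    xs 0%N = (fun _ _ _ => 0) /\
    (forall i, (1 <= i <= m)%N ->
       [/\ inP (ys i),
           (forall y, inP y -> inner_grad y (xs i.-1) <= inner_grad (ys i) (xs i.-1)) &
           xs i = (fun v s t => xs i.-1 v s t + ys i v s t / m%:R)]) /\
    x = xs m.

Definition SQobj (x : vec) (v : nat) (y : 'I_S -> nat -> R) : R :=
  \sum_(1 <= t < T.+1) \sum_(s < S)
     lam s t * (\prod_(u < v) (1 - p u s * x u s t)) * p v s * y s t.

Definition IsSQ (x : vec) : Prop :=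
  forall v, (v < V)%N ->
    feasv (x v) /\ (forall y, feasv y -> SQobj x v y <= SQobj x v (x v)).

Definition IsXstar (x xLP xAA xSQ : vec) : Prop :=
  [/\ x = xLP \/ x = xAA \/ x = xSQ,
      fobj xLP <= fobj x, fobj xAA <= fobj x & fobj xSQ <= fobj x].

Definition cont (J : nat -> R) (t : nat) : R :=
  \sum_(t.+1 <= tau < T.+1) g (tau - t) * J tau.

Definition sel (xv r : 'I_S -> nat -> R) (J : nat -> R) (s : 'I_S) (t : nat) : R :=
  xv s t * (if J t.+1 <= r s t + cont J t then 1 else 0).

(* Jf xv r n : the values J_tau for tau > T - n (tau <= T+1), J_{T+1} = 0 *)
Fixpoint Jf (xv r : 'I_S -> nat -> R) (n : nat) : nat -> R :=
  match n with
  | 0%N => fun _ => 0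
  | n'.+1 =>
      let J := Jf xv r n' in
      let t := (T - n')%N in
      fun tau =>
        if tau == t then
          \sum_(s < S) lam s t *
             ((1 - sel xv r J s t) * J t.+1 + sel xv r J s t * (r s t + cont J t))
          + lam0 t * J t.+1
        else J tau
  end.

Definition xtil_of (xv r : 'I_S -> nat -> R) (s : 'I_S) (t : nat) : R :=
  sel xv r (Jf xv r T) s t.

Section SNx.
Variable xs : vec.

Fixpoint pre (v : nat) : 'I_S -> nat -> R :=
  match v with
  | 0%N => fun _ _ => 1
  | v'.+1 => fun s t =>
      pre v' s t *
      (1 - xtil_of (xs v') (fun s' t' => p v' s' * pre v' s' t') s t * p v' s)
  end.

Definition xtil (v : nat) (s : 'I_S) (t : nat) : R :=
  xtil_of (xs v) (fun s' t' => p v s' * pre v s' t') s t.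

(* State a : 'I_V -> nat, volunteer v is active at time t iff a v <= t.
   When a notified active volunteer's inter-activity time Z is drawn at t,
   the outcome is encoded by k : 'I_T.+1 :  k = 0 means Z > T - t (she does
   not come back within the horizon), k >= 1 means Z = k. *)
Definition zweight (act : bool) (t : nat) (k : 'I_T.+1) : R :=
  if act then
    (if (val k == 0)%N then 1 - Gc (T - t)
     else if (val k <= T - t)%N then g k else 0)
  else (if (val k == 0)%N then 1 else 0).

Definition newstate (a : 'I_V -> nat) (N : {set 'I_V}) (t : nat)
   (z : {ffun 'I_V -> 'I_T.+1}) : 'I_V -> nat :=
  fun v => if (v \in N) && (a v <= t)%N then
             (if (val (z v) == 0)%N then T.+1 else (t + z v)%N)
           else a v.

(* W n a : expected number of tasks completed in periods T-n+1,...,T,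
   starting at period T-n+1 in state a *)
Fixpoint W (n : nat) (a : 'I_V -> nat) : R :=
  match n with
  | 0%N => 0
  | n'.+1 =>
      let t := (T - n')%N in
      \sum_(s < S) lam s t *
        \sum_(N : {set 'I_V})
          (\prod_(v in N) xtil v s t) * (\prod_(v in ~: N) (1 - xtil v s t)) *
          ((1 - \prod_(v in N | (a v <= t)%N) (1 - p v s)) +
           \sum_(z : {ffun 'I_V -> 'I_T.+1})
              (\prod_(v : 'I_V) zweight ((v \in N) && (a v <= t)%N) t (z v)) *
              W n' (newstate a N t z))
      + lam0 t * W n' a
  end.

(* POL: all volunteers initially active *)
Definition POL_SN : R := W T (fun _ => 0%N).

End SNx.

End VolunteerNotification.

(* By concavity, 1 - exp(-z) >= (1 - 1/e) min(z, 1), hence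
   (1 - 1/e) LP <= f(x_LP) <= f(xstar).  Telescoping 1 - prod_v (1 - y_v) over
   the volunteers splits f(xstar) into credits lam xstar_v r_v, where
   r_v = p_v prod_(u<v) (1 - xtilde_u p_u) is the probability that v is the
   first volunteer to respond.  The dynamic program J_v of volunteer v notifies
   only when the credit beats the loss of continuation value; a charging
   argument, using the constraint of P and the hazard-rate bound
   1 - G(k+1) <= (1 - q) (1 - G(k)), shows that J_v(1) collects at least a
   1/(2 - q) fraction of v's credit.  Finally, by backward induction over the
   periods, the expected number of tasks completed by SN dominates
   sum_v J_v(1): when a task arrives, the completion probability is at least
   the sum of the first-success probabilities of the active notified
   volunteers, and each volunteer's next state is drawn as in J_v. *)

From HB Require Import structures.
From mathcomp Require Import all_boot all_order all_algebra.
From mathcomp Require Import all_classical all_reals all_analysis.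
From mathcomp Require Import ring lra zify.
Set Implicit Arguments.
Unset Strict Implicit.
Unset Printing Implicit Defensive.

Import Order.TTheory GRing.Theory Num.Theory numFieldNormedType.Exports.
Local Open Scope classical_set_scope.
Local Open Scope ring_scope.

Section TriangularSums.
Variable M : nmodType.

Lemma exchange_big_nat_triangle (a b : nat) (F : nat -> nat -> M) :
  \sum_(a <= t < b) \sum_(t.+1 <= u < b) F t u =
  \sum_(a <= u < b) \sum_(a <= t < u) F t u.
Proof.
elim: b => [|b IH]; first by rewrite !big_geq.
have [ab|ba] := leqP a b; last by rewrite !big_geq.
rewrite big_nat_recr //= [in RHS]big_nat_recr //= -IH.
rewrite [X in _ + X]big_geq // addr0 -big_split /=.
by apply: eq_big_nat => t /andP[_ tb]; rewrite big_nat_recr.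
Qed.

Lemma exchange_big_nat_triangle_le (a b : nat) (F : nat -> nat -> M) :
  \sum_(a <= u < b) \sum_(a <= t < u.+1) F t u =
  \sum_(a <= t < b) \sum_(t <= u < b) F t u.
Proof.
rewrite (eq_big_nat _ _ (fun u au => big_nat_recr _ _ _ (andP au).1)) /=.
rewrite big_split /= -exchange_big_nat_triangle -big_split /=.
by apply: eq_big_nat => t /andP[_ tb]; rewrite [RHS]big_ltn // addrC.
Qed.

End TriangularSums.

Lemma telescope_sumr_to0 {M : zmodType} (J : nat -> M) (a n : nat) :
  J n = 0 -> (a <= n)%N -> \sum_(a <= u < n) (J u - J u.+1) = J a.
Proof.
move=> Jn0 an; rewrite (telescope_sumr_eq (fun k => - J k)) // ?Jn0 ?oppr0 ?opprK ?add0r //.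
by move=> k _; rewrite opprK addrC.
Qed.

(* Each [A t] is charged to the decrement [J t - J t.+1] plus a [y t]-share of
   the later decrements; a decrement at [u] receives total share at most
   [1 - q], which is where the factor [2 - q] comes from. *)
Lemma sum_le_charging (R : realFieldType) (T : nat) (q : R) (J A y G : nat -> R) :
  J T.+1 = 0 ->
  (forall t, (1 <= t <= T)%N -> 0 <= J t - J t.+1) ->
  (forall t, (1 <= t <= T)%N -> A t <= J t - J t.+1 +
     y t * \sum_(t.+1 <= u < T.+1) (J u - J u.+1) * (1 - G (u - t)%N)) ->
  (forall u, (1 <= u <= T)%N -> \sum_(1 <= t < u) y t * (1 - G (u - t)%N) <= 1 - q) ->
  \sum_(1 <= t < T.+1) A t <= (2 - q) * J 1%N.
Proof.
move=> JT0 dJ_ge0 A_le share_le.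
have sum_dJ := @telescope_sumr_to0 _ J 1 _ JT0 (ltn0Sn T).
apply: le_trans (_ : _ <= \sum_(1 <= t < T.+1) (J t - J t.+1 +
  y t * \sum_(t.+1 <= u < T.+1) (J u - J u.+1) * (1 - G (u - t)%N))) _.
  by apply: ler_sum_nat => t; rewrite -ltnS; apply: A_le.
rewrite big_split /= sum_dJ.
under eq_bigr do rewrite mulr_sumr.
rewrite exchange_big_nat_triangle.
have -> : (2 - q) * J 1%N = J 1%N + (1 - q) * J 1%N by ring.
rewrite lerD2l -sum_dJ mulr_sumr; apply: ler_sum_nat => u uT.
have {}uT : (1 <= u <= T)%N by rewrite -ltnS.
rewrite (eq_bigr (fun t => (J u - J u.+1) * (y t * (1 - G (u - t)%N)))); last by move=> t _; ring.
by rewrite -mulr_sumr [X in _ <= X]mulrC ler_wpM2l ?dJ_ge0 ?share_le.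
Qed.

Lemma Gc_sub (R : realType) (g : nat -> R) (t u : nat) : (t <= u)%N ->
  Gc g (u - t) = \sum_(t.+1 <= tau < u.+1) g (tau - t)%N.
Proof.
move=> tu; rewrite /Gc -{1}(add1n t) big_addn -subSn //.
by apply: eq_bigr => i _; rewrite addnK.
Qed.

Lemma next_sub_cont (R : realType) (T : nat) (g J : nat -> R) (t : nat) :
  (t <= T)%N -> J T.+1 = 0 ->
  J t.+1 - cont T g J t =
  \sum_(t.+1 <= u < T.+1) (J u - J u.+1) * (1 - Gc g (u - t)%N).
Proof.
move=> tT JT0; rewrite /cont.
under [RHS]eq_big_nat => u /andP[tu _].
  rewrite mulrBr mulr1 Gc_sub ?(ltnW tu) // mulr_sumr.
over.
rewrite sumrB telescope_sumr_to0 // exchange_big_nat_triangle_le; congr (_ - _).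
apply: eq_big_nat => tau /andP[ttau tauT].
by rewrite -mulr_suml telescope_sumr_to0 1?mulrC // ltnW.
Qed.

Section Hazard.
Variables (R : realType) (g : nat -> R) (q : R).
Hypothesis g_ge0 : forall i, (0 < i)%N -> 0 <= g i.
Hypothesis Gc_cvg : (Gc g) @ \oo --> (1 : R).
Hypothesis mdhr : IsMDHR g q.

Lemma GcS k : Gc g k.+1 = Gc g k + g k.+1.
Proof. by rewrite /Gc big_nat_recr. Qed.

Lemma Gc0 : Gc g 0 = 0.
Proof. by rewrite /Gc big_geq. Qed.

Lemma Gc_le1 k : Gc g k <= 1.
Proof.
have Gc_nd : {homo Gc g : n m / (n <= m)%N >-> n <= m}.
  by apply: (homo_leq lexx le_trans) => n; rewrite GcS lerDl g_ge0.
have := @nondecreasing_cvgn_le R (Gc g) Gc_nd (cvgP _ Gc_cvg) k.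
by rewrite (cvg_lim _ Gc_cvg).
Qed.

Lemma survivalS_le k : 1 - Gc g k.+1 <= (1 - q) * (1 - Gc g k).
Proof.
have := mdhr.2 k.+1 (ltn0Sn k); rewrite /hazard /= GcS.
have := g_ge0 (ltn0Sn k); have := Gc_le1 k.
case: eqP => [surv0 | /eqP surv_neq0] Gk_le1 gk_ge0 q_le; first by rewrite surv0 mulr0; lra.
have surv_gt0 : 0 < 1 - Gc g k by rewrite lt_neqAle eq_sym surv_neq0 subr_ge0.
by rewrite ler_pdivlMr // in q_le; nra.
Qed.

Lemma mdhr_le1 : q <= 1.
Proof.
have := mdhr.2 1%N (ltn0Sn 0); rewrite /hazard /= Gc0 subr0 oner_eq0 divr1.
by have := Gc_le1 1; rewrite GcS Gc0; lra.
Qed.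

End Hazard.

Section DynamicProgram.
Variables (R : realType) (S T : nat) (lam : 'I_S -> nat -> R) (g : nat -> R).
Variables (xv r : 'I_S -> nat -> R).

Lemma eq_cont {J1 J2 : nat -> R} {t : nat} :
  (forall tau, (t < tau)%N -> J1 tau = J2 tau) -> cont T g J1 t = cont T g J2 t.
Proof. by move=> J12; apply: eq_big_nat => tau /andP[/J12 ->]. Qed.

Lemma eq_sel {J1 J2 : nat -> R} s {t : nat} :
  (forall tau, (t < tau)%N -> J1 tau = J2 tau) ->
  sel T g xv r J1 s t = sel T g xv r J2 s t.
Proof. by move=> J12; rewrite /sel (eq_cont J12) J12. Qed.

Lemma Jf_eq0 n tau : (T < tau)%N -> Jf T lam g xv r n tau = 0.
Proof.
move=> Ttau; elim: n => [|n IH] //=.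
by case: eqP => [tauE|_] //; move: Ttau; rewrite tauE ltnNge leq_subr.
Qed.

Lemma Jf_addn n k tau : (n + k <= T)%N -> (T - n < tau)%N ->
  Jf T lam g xv r (n + k) tau = Jf T lam g xv r n tau.
Proof.
move=> nkT ntau; elim: k nkT => [|k IH] nkT; first by rewrite addn0.
rewrite addnS /=; case: eqP => [tauE|_]; last by apply: IH; rewrite ltnW // -addnS.
by move: ntau; rewrite tauE ltnNge leq_sub2l ?leq_addr.
Qed.

Lemma Jf_bellman t : (1 <= t <= T)%N ->
  let J := Jf T lam g xv r T in
  J t = \sum_(s < S) lam s t *
          ((1 - sel T g xv r J s t) * J t.+1 + sel T g xv r J s t * (r s t + cont T g J t))
        + lam0 lam t * J t.+1.
Proof.
move=> /andP[t_gt0 tT] J; set n := (T - t)%N.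
have nT : (n < T)%N by rewrite /n ltn_subrL t_gt0 (leq_trans _ tT).
have tE : t = (T - n)%N by rewrite /n subKn.
have J_after : forall tau, (t < tau)%N -> J tau = Jf T lam g xv r n tau.
  move=> tau ttau; have := @Jf_addn n (T - n) tau.
  by rewrite subnKC ?(ltnW nT) // -tE; apply.
have -> : J t = Jf T lam g xv r n.+1 t.
  have := @Jf_addn n.+1 (T - n.+1) t; rewrite subnKC //; apply => //.
  by rewrite tE subnS prednK ?subn_gt0 // ltnS.
rewrite /= -tE eqxx (J_after t.+1 (ltnSn t)) (eq_cont J_after).
by congr (_ + _); apply: eq_bigr => s _; rewrite (eq_sel s J_after).
Qed.

End DynamicProgram.

Section VolunteerBound.
Variables (R : realType) (S T : nat) (lam : 'I_S -> nat -> R) (g : nat -> R) (q : R).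
Hypothesis lam_ge0 : forall s t, (1 <= t <= T)%N -> 0 <= lam s t.
Hypothesis q_le1 : q <= 1.
Hypothesis survival_decay : forall k, 1 - Gc g k.+1 <= (1 - q) * (1 - Gc g k).

(* A decrement of the survival function by the factor [1 - q] per period turns
   the feasibility constraint at [u - 1] into a bound [1 - q] at [u]. *)
Lemma feasv_share_le (y : 'I_S -> nat -> R) u : feasv T lam g y -> (1 <= u <= T)%N ->
  \sum_(1 <= t < u) (\sum_(s < S) lam s t * y s t) * (1 - Gc g (u - t)%N) <= 1 - q.
Proof.
move=> [y01 y_cons] /andP[u_gt0 uT].
case: (ltnP 1 u) => [u_gt1|u_le1]; last by rewrite big_geq // subr_ge0.
have uE : u = u.-1.+1 by rewrite prednK.
apply: le_trans (_ : _ <= (1 - q) * \sum_(1 <= t < u.-1.+1) \sum_(s < S)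
                            lam s t * y s t * (1 - Gc g (u.-1 - t))) _.
  rewrite -uE mulr_sumr; apply: ler_sum_nat => t /andP[t_gt0 tu].
  rewrite mulr_suml mulr_sumr; apply: ler_sum => s _.
  have tT : (1 <= t <= T)%N by rewrite t_gt0 (leq_trans (ltnW tu)).
  have ly_ge0 : 0 <= lam s t * y s t by rewrite mulr_ge0 ?lam_ge0 //; case/andP: (y01 s t tT).
  have utE : (u - t = (u.-1 - t).+1)%N by lia.
  by rewrite [X in _ <= X]mulrCA ler_wpM2l // utE survival_decay.
by rewrite ler_piMr ?subr_ge0 // y_cons //; lia.
Qed.

Variables (xv r : 'I_S -> nat -> R).

Lemma sel_gain_ge0 J s t :
  0 <= xv s t -> 0 <= sel T g xv r J s t * (r s t + cont T g J t - J t.+1).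
Proof.
move=> x_ge0; rewrite /sel; case: ifP => [J_le|_]; last by rewrite mulr0 mul0r.
by rewrite mulr1 mulr_ge0 // subr_ge0.
Qed.

Lemma sel_gain_ge J s t : 0 <= xv s t ->
  xv s t * (r s t + cont T g J t - J t.+1) <= sel T g xv r J s t * (r s t + cont T g J t - J t.+1).
Proof.
move=> x_ge0; rewrite /sel; case: ifP => [_|/negbT]; first by rewrite mulr1.
by rewrite -ltNge -subr_lt0 mulr0 mul0r => gain_lt0; rewrite mulr_ge0_le0 // ltW.
Qed.

Hypothesis xv_feas : feasv T lam g xv.

Let J := Jf T lam g xv r T.

Lemma Jf_decrement t : (1 <= t <= T)%N ->
  J t - J t.+1 = \sum_(s < S) lam s t * sel T g xv r J s t * (r s t + cont T g J t - J t.+1).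
Proof.
move=> tT; rewrite {1}/J (Jf_bellman _ _ _ _ tT) -/J /lam0 mulrBl mul1r mulr_suml.
by rewrite addrAC addrA subrK -sumrB; apply: eq_bigr => s _; ring.
Qed.

Lemma credit_le_dp_value :
  \sum_(1 <= t < T.+1) \sum_(s < S) lam s t * xv s t * r s t <= (2 - q) * J 1%N.
Proof.
have x_ge0 s t : (1 <= t <= T)%N -> 0 <= xv s t by case/(xv_feas.1 s)/andP.
have JT0 : J T.+1 = 0 by apply: Jf_eq0.
apply: (@sum_le_charging R T q J _ (fun t => \sum_(s < S) lam s t * xv s t) (Gc g)) => //.
- move=> t tT; rewrite Jf_decrement //; apply: sumr_ge0 => s _.
  by rewrite -mulrA mulr_ge0 ?lam_ge0 ?sel_gain_ge0 ?x_ge0.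
- move=> t tT; rewrite -next_sub_cont ?JT0 ?(andP tT).2 // Jf_decrement //.
  rewrite mulr_suml -lerBlDr -sumrB; apply: ler_sum => s _.
  have -> : lam s t * xv s t * r s t - lam s t * xv s t * (J t.+1 - cont T g J t) =
            lam s t * (xv s t * (r s t + cont T g J t - J t.+1)) by ring.
  by rewrite -mulrA ler_wpM2l ?lam_ge0 ?sel_gain_ge ?x_ge0.
- by move=> u uT; apply: feasv_share_le.
Qed.

End VolunteerBound.

Section IndependentSampling.
Variables (R : comPzRingType) (I : finType).

Lemma prod_split_set (N : {set I}) (F G : I -> R) :
  \prod_(v in N) F v * \prod_(v in ~: N) G v = \prod_v (if v \in N then F v else G v).
Proof.
rewrite [RHS](bigID (mem N)) /=; congr (_ * _); first by apply: eq_bigr => v ->.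
rewrite (eq_bigl (fun v => v \notin N)) => [|v]; last by rewrite !inE.
by apply: eq_bigr => v /negbTE ->.
Qed.

Lemma sum_set_prod (f : I -> bool -> R) :
  \sum_(N : {set I}) \prod_v f v (v \in N) = \prod_v (f v true + f v false).
Proof.
under [RHS]eq_bigr do rewrite -big_bool.
rewrite bigA_distr_bigA /= (reindex (fun F : {ffun I -> bool} => [set v | F v]%SET)) /=.
  by apply: eq_bigr => F _; apply: eq_bigr => v _; rewrite inE.
exists (fun N : {set I} => [ffun v => v \in N]) => [F _|N _].
  by apply/ffunP => v; rewrite ffunE inE.
by apply/setP => v; rewrite inE ffunE.
Qed.

Lemma sum_ffun_prod_marginal (J : finType) (w : I -> J -> R) (phi : J -> R) (v0 : I) :
  (forall u, \sum_k w u k = 1) ->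
  \sum_(z : {ffun I -> J}) (\prod_u w u (z u)) * phi (z v0) = \sum_k w v0 k * phi k.
Proof.
move=> w_sum1.
pose w' u k := if u == v0 then w u k * phi k else w u k.
have prod_w' : \prod_u \sum_k w' u k = \sum_k w v0 k * phi k.
  rewrite (bigD1 v0) //= [X in _ * X]big1 ?mulr1.
    by apply: eq_bigr => k _; rewrite /w' eqxx.
  move=> u /negbTE u_neq; rewrite -(w_sum1 u).
  by apply: eq_bigr => k _; rewrite /w' u_neq.
rewrite -prod_w' bigA_distr_bigA /=; apply: eq_bigr => z _.
rewrite (bigD1 v0) //= [RHS](bigD1 v0) //= /w' eqxx mulrAC; congr (_ * _).
by apply: eq_bigr => u /negbTE ->.
Qed.

Variable x : I -> R.

Definition sample_weight (N : {set I}) :=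
  \prod_(v in N) x v * \prod_(v in ~: N) (1 - x v).

Lemma sum_sample_weight : \sum_N sample_weight N = 1.
Proof.
under eq_bigr do rewrite /sample_weight prod_split_set.
rewrite (sum_set_prod (fun v b => if b then x v else 1 - x v)).
by rewrite big1 // => v _; rewrite subrKC.
Qed.

Lemma sum_sample_weight_mem v0 (A B : R) :
  \sum_N sample_weight N * (if v0 \in N then A else B) = x v0 * A + (1 - x v0) * B.
Proof.
pose f v (b : bool) := (if b then x v else 1 - x v) * (if v == v0 then (if b then A else B) else 1).
rewrite (eq_bigr (fun N : {set I} => \prod_v f v (v \in N))) => [|N _].
  rewrite sum_set_prod (bigD1 v0) //= big1 ?mulr1 /f ?eqxx // => v /negbTE ->.
  by rewrite !mulr1 subrKC.
have -> : (if v0 \in N then A else B) =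
          \prod_v (if v == v0 then (if v \in N then A else B) else 1).
  by rewrite -big_mkcond big_pred1_eq.
rewrite /sample_weight prod_split_set -big_split /=.
by apply: eq_bigr => v _; rewrite /f; case: (v \in N).
Qed.

Lemma sum_sample_weight_prod (P : pred I) (p : I -> R) :
  \sum_N sample_weight N * \prod_(v in N | P v) (1 - p v) =
  \prod_v (1 - x v * (if P v then p v else 0)).
Proof.
pose f v (b : bool) := if b then x v * (if P v then 1 - p v else 1) else 1 - x v.
rewrite (eq_bigr (fun N : {set I} => \prod_v f v (v \in N))) => [|N _].
  by rewrite sum_set_prod; apply: eq_bigr => v _; rewrite /f; case: (P v); ring.
rewrite /sample_weight prod_split_set [X in _ * X]big_mkcond -big_split /=.
by apply: eq_bigr => v _; rewrite /f; case: (v \in N); case: (P v) => /=; ring.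
Qed.

End IndependentSampling.

Lemma one_sub_prod_first_success (R : comPzRingType) (n : nat) (y : nat -> R) :
  1 - \prod_(i < n) (1 - y i) = \sum_(i < n) y i * \prod_(j < i) (1 - y j).
Proof.
elim: n => [|n IH]; first by rewrite !big_ord0 subrr.
by rewrite big_ord_recr big_ord_recr /= -IH; ring.
Qed.

Lemma sum_first_success_le (R : realFieldType) (n : nat) (c y : nat -> R) :
  (forall i, (i < n)%N -> 0 <= y i <= 1) -> (forall i, (i < n)%N -> 0 <= c i <= 1) ->
  \sum_(i < n) c i * y i * \prod_(j < i) (1 - y j) <= 1 - \prod_(i < n) (1 - c i * y i).
Proof.
elim: n => [|n IH] y01 c01; first by rewrite !big_ord0 subrr.
have IHn := IH (fun i ni => y01 i (ltnW ni)) (fun i ni => c01 i (ltnW ni)).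
have prod_le : \prod_(j < n) (1 - y j) <= \prod_(j < n) (1 - c j * y j).
  apply: ler_prod => j _.
  by have := y01 j (ltnW (ltn_ord j)); have := c01 j (ltnW (ltn_ord j)); nra.
have cy_ge0 : 0 <= c n * y n.
  by have := y01 n (ltnSn n); have := c01 n (ltnSn n); nra.
rewrite big_ord_recr big_ord_recr /=.
have -> : 1 - \prod_(i < n) (1 - c i * y i) * (1 - c n * y n) =
          1 - \prod_(i < n) (1 - c i * y i) + c n * y n * \prod_(i < n) (1 - c i * y i) by ring.
by rewrite lerD // ler_wpM2l.
Qed.

Section InterActivityDraw.
Variables (R : realType) (T : nat) (g : nat -> R).
Hypothesis g_ge0 : forall i, (0 < i)%N -> 0 <= g i.

Lemma sum_ord_cut (F : nat -> R) (a : R) (m : nat) : (m <= T)%N ->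
  \sum_(k < T.+1) (if val k == 0%N then a else if (val k <= m)%N then F k else 0) =
  a + \sum_(1 <= i < m.+1) F i.
Proof.
move=> mT; rewrite big_ord_recl /=; congr (_ + _).
rewrite (eq_bigr (fun i : 'I_T => if (i < m)%N then F i.+1 else 0)) => [|i _]; last by [].
by rewrite -big_mkcond big_add1 /= (big_nat_widen _ _ _ _ _ mT) big_mkord.
Qed.

Lemma cont_shift (J : nat -> R) t : (t <= T)%N ->
  cont T g J t = \sum_(1 <= i < (T - t).+1) g i * J (t + i)%N.
Proof.
move=> tT; rewrite /cont -(add1n t) big_addn -subSn //.
by apply: eq_bigr => i _; rewrite addnK addnC.
Qed.

Hypothesis G_le1 : forall k, Gc g k <= 1.

Lemma zweight_ge0 c t (k : 'I_T.+1) : 0 <= zweight g c t k.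
Proof.
rewrite /zweight; case: c; case: eqP => // k_neq0; rewrite ?subr_ge0 //.
by case: ifP => // _; apply: g_ge0; rewrite lt0n; apply/eqP.
Qed.

Lemma sum_zweight c t : (t <= T)%N -> \sum_(k < T.+1) zweight g c t k = 1.
Proof.
move=> tT; rewrite /zweight; case: c; first by rewrite sum_ord_cut ?leq_subr // subrK.
by rewrite big_ord_recl /= big1 ?addr0.
Qed.

Lemma sum_zweight_next (J : nat -> R) (a : nat) (c : bool) t :
  (t <= T)%N -> J T.+1 = 0 ->
  \sum_(k < T.+1) zweight g c t k *
      J (maxn (if c then (if val k == 0%N then T.+1 else (t + k)%N) else a) t.+1)
  = if c then cont T g J t else J (maxn a t.+1).
Proof.
move=> tT JT0; rewrite /zweight; case: c; last first.
  by rewrite big_ord_recl /= mul1r big1 ?addr0 // => k _; rewrite mul0r.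
rewrite cont_shift // -[X in _ = X]add0r -sum_ord_cut ?leq_subr //.
apply: eq_bigr => k _; case: eqP => [_|k_neq0]; first by rewrite (maxn_idPl _) // JT0 mulr0.
case: ifP => _; rewrite ?mul0r // (maxn_idPl _) //.
by rewrite -{1}(addn0 t) ltn_add2l lt0n; apply/eqP.
Qed.

End InterActivityDraw.

Lemma sample_weight_ge0 (R : numDomainType) (I : finType) (x : I -> R) (N : {set I}) :
  (forall v, 0 <= x v <= 1) -> 0 <= sample_weight x N.
Proof.
move=> x01; rewrite /sample_weight mulr_ge0 // prodr_ge0 // => v _.
  by case/andP: (x01 v).
by rewrite subr_ge0; case/andP: (x01 v).
Qed.

Section SNValue.
Variables (R : realType) (V S T : nat) (lam : 'I_S -> nat -> R) (p : nat -> 'I_S -> R).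
Variables (g : nat -> R) (xs : vec R S).
Hypothesis lam_ge0 : forall s t, (1 <= t <= T)%N -> 0 <= lam s t.
Hypothesis lam_sum_le1 : forall t, (1 <= t <= T)%N -> \sum_(s < S) lam s t <= 1.
Hypothesis p01 : forall v s, (v < V)%N -> 0 <= p v s <= 1.
Hypothesis xs01 : forall v s t, (v < V)%N -> (1 <= t <= T)%N -> 0 <= xs v s t <= 1.
Hypothesis g_ge0 : forall i, (0 < i)%N -> 0 <= g i.
Hypothesis G_le1 : forall k, Gc g k <= 1.

Local Notation xt := (xtil T lam p g xs).

Definition sn_reward (v : nat) : 'I_S -> nat -> R := fun s t => p v s * pre T lam p g xs v s t.

Definition sn_value (v : nat) : nat -> R := Jf T lam g (xs v) (sn_reward v) T.

Lemma xtilE v s t : xt v s t = sel T g (xs v) (sn_reward v) (sn_value v) s t.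
Proof. by []. Qed.

Lemma xtil01 v s t : (v < V)%N -> (1 <= t <= T)%N -> 0 <= xt v s t <= 1.
Proof.
by move=> vV tT; rewrite xtilE /sel; case: ifP; rewrite ?mulr1 ?xs01 // mulr0 lexx ler01.
Qed.

Lemma xtil_le v s t : (v < V)%N -> (1 <= t <= T)%N -> xt v s t <= xs v s t.
Proof.
move=> vV tT; rewrite xtilE /sel; case: ifP => _; first by rewrite mulr1.
by rewrite mulr0; case/andP: (xs01 s vV tT).
Qed.

Lemma pre_prod v s t : pre T lam p g xs v s t = \prod_(j < v) (1 - xt j s t * p j s).
Proof. by elim: v => [|v IH]; rewrite ?big_ord0 // big_ord_recr /= -IH. Qed.

Lemma sn_value_eq0 v tau : (T < tau)%N -> sn_value v tau = 0.
Proof. exact: Jf_eq0. Qed.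

(* Expected virtual reward plus continuation value of all volunteers when a
   type-[s] task arrives at [t]; volunteer [v] is active iff [a v <= t]. *)
Definition sn_step_value (a : 'I_V -> nat) s t :=
  \sum_(v < V) ((if (a v <= t)%N then xt v s t * sn_reward v s t else 0) +
    (xt v s t * (if (a v <= t)%N then cont T g (sn_value v) t
                 else sn_value v (maxn (a v) t.+1))
     + (1 - xt v s t) * sn_value v (maxn (a v) t.+1))).

Lemma sum_sn_value_bellman (a : 'I_V -> nat) t : (1 <= t <= T)%N ->
  \sum_(v < V) sn_value v (maxn (a v) t) =
  \sum_(s < S) lam s t * sn_step_value a s t
  + lam0 lam t * \sum_(v < V) sn_value v (maxn (a v) t.+1).
Proof.
move=> tT; under [in RHS]eq_bigr do rewrite mulr_sumr.
rewrite exchange_big /= mulr_sumr -big_split /=; apply: eq_bigr => v _.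
have [active|inactive] := leqP (a v) t.
  rewrite (maxn_idPr (leqW active)) {1}/sn_value.
  rewrite (Jf_bellman _ _ _ _ tT) -/(sn_value v); congr (_ + _).
  by apply: eq_bigr => s _; rewrite xtilE; ring.
rewrite (maxn_idPl inactive) /lam0.
by under eq_bigr do rewrite add0r -mulrDl subrKC mul1r; rewrite -mulr_suml; ring.
Qed.

Lemma sum_sn_reward_le_completion (a : 'I_V -> nat) s t : (1 <= t <= T)%N ->
  \sum_(v < V) (if (a v <= t)%N then xt v s t * sn_reward v s t else 0) <=
  \sum_(N : {set 'I_V}) sample_weight (fun v : 'I_V => xt v s t) N *
     (1 - \prod_(v in N | (a v <= t)%N) (1 - p v s)).
Proof.
move=> tT; under [X in _ <= X]eq_bigr do rewrite mulrBr mulr1.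
rewrite sumrB sum_sample_weight sum_sample_weight_prod.
pose active i := oapp (fun v : 'I_V => if (a v <= t)%N then 1 else 0) (0 : R) (insub i).
have activeE (v : 'I_V) : active v = if (a v <= t)%N then 1 else 0 by rewrite /active valK.
have -> : \sum_(v < V) (if (a v <= t)%N then xt v s t * sn_reward v s t else 0) =
          \sum_(i < V) active i * (xt i s t * p i s) * \prod_(j < i) (1 - xt j s t * p j s).
  by apply: eq_bigr => v _; rewrite activeE /sn_reward pre_prod; case: ifP => _; ring.
have -> : \prod_(v < V) (1 - xt v s t * (if (a v <= t)%N then p v s else 0)) =
          \prod_(i < V) (1 - active i * (xt i s t * p i s)).
  by apply: eq_bigr => v _; rewrite activeE; case: ifP => _; ring.
apply: (@sum_first_success_le R V active (fun i => xt i s t * p i s)) => i iV.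
  by have := xtil01 s iV tT; have := p01 s iV; nra.
by rewrite /active; case: insub => [v|] /=; [case: ifP|]; rewrite ?lexx ?ler01.
Qed.

Lemma sn_step_value_le (a : 'I_V -> nat) s t : (1 <= t <= T)%N ->
  sn_step_value a s t <=
  \sum_(N : {set 'I_V}) sample_weight (fun v : 'I_V => xt v s t) N *
     ((1 - \prod_(v in N | (a v <= t)%N) (1 - p v s)) +
      \sum_(v < V) (if (v \in N) && (a v <= t)%N then cont T g (sn_value v) t
                    else sn_value v (maxn (a v) t.+1))).
Proof.
move=> tT; under [X in _ <= X]eq_bigr do rewrite mulrDr.
rewrite /sn_step_value big_split [X in _ <= X]big_split /=.
apply: lerD; first exact: sum_sn_reward_le_completion.
under [X in _ <= X]eq_bigr do rewrite mulr_sumr.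
rewrite [X in _ <= X]exchange_big /=; apply: ler_sum => v _.
rewrite (eq_bigr (fun N => sample_weight (fun v : 'I_V => xt v s t) N *
    (if v \in N then (if (a v <= t)%N then cont T g (sn_value v) t
                      else sn_value v (maxn (a v) t.+1))
     else sn_value v (maxn (a v) t.+1)))) => [|N _]; last by case: (v \in N).
by rewrite sum_sample_weight_mem.
Qed.

Lemma expected_next_value (a : 'I_V -> nat) (N : {set 'I_V}) t : (t <= T)%N ->
  \sum_(z : {ffun 'I_V -> 'I_T.+1})
     (\prod_(v : 'I_V) zweight g ((v \in N) && (a v <= t)%N) t (z v)) *
     \sum_(v < V) sn_value v (maxn (newstate a N t z v) t.+1) =
  \sum_(v < V) (if (v \in N) && (a v <= t)%N then cont T g (sn_value v) t
                else sn_value v (maxn (a v) t.+1)).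
Proof.
move=> tT; under eq_bigr do rewrite mulr_sumr.
rewrite exchange_big /=; apply: eq_bigr => v _.
pose w (u : 'I_V) (k : 'I_T.+1) := zweight g ((u \in N) && (a u <= t)%N) t k.
pose phi (k : 'I_T.+1) := sn_value v (maxn (if (v \in N) && (a v <= t)%N
  then (if val k == 0%N then T.+1 else (t + k)%N) else a v) t.+1).
rewrite -sum_zweight_next ?sn_value_eq0 //.
by rewrite -(@sum_ffun_prod_marginal _ _ _ w phi v (fun u => sum_zweight _ _ tT)).
Qed.

Lemma sum_sn_value_le_W n : (n <= T)%N -> forall a : 'I_V -> nat,
  \sum_(v < V) sn_value v (maxn (a v) (T - n).+1) <= W T lam p g xs n a.
Proof.
elim: n => [|n IH] nT a.
  by rewrite big1 // => v _; rewrite sn_value_eq0 // subn0 leq_max ltnSn orbT.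
have {}IH := IH (ltnW nT).
have tT : (1 <= T - n <= T)%N by apply/andP; split; lia.
have -> : (T - n.+1).+1 = (T - n)%N by lia.
rewrite /= sum_sn_value_bellman //.
apply: lerD; last by rewrite ler_wpM2l ?IH // /lam0 subr_ge0 lam_sum_le1.
apply: ler_sum => s _; rewrite ler_wpM2l ?lam_ge0 //.
apply: le_trans (sn_step_value_le a s tT) _.
apply: ler_sum => N _; apply: ler_wpM2l.
  by apply: sample_weight_ge0 => v; apply: xtil01.
rewrite lerD2l -expected_next_value ?(andP tT).2 //; apply: ler_sum => z _.
by rewrite ler_wpM2l ?IH // prodr_ge0 // => v _; apply: zweight_ge0.
Qed.

Lemma fobj_le_sum_credit :
  fobj V T lam p xs <=
  \sum_(v < V) \sum_(1 <= t < T.+1) \sum_(s < S) lam s t * xs v s t * sn_reward v s t.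
Proof.
rewrite /fobj [X in _ <= X]exchange_big /=; apply: ler_sum_nat => t tT.
have {}tT : (1 <= t <= T)%N by rewrite -ltnS.
rewrite [X in _ <= X]exchange_big /=; apply: ler_sum => s _.
rewrite (one_sub_prod_first_success V (fun i => xs i s t * p i s)) mulr_sumr.
apply: ler_sum => v _.
rewrite /sn_reward pre_prod -!mulrA; apply: ler_wpM2l; first exact: lam_ge0.
rewrite !mulrA; apply: ler_wpM2l.
  by have := xs01 s (ltn_ord v) tT; have := p01 s (ltn_ord v); nra.
apply: ler_prod => j _; have jV : (j < V)%N := ltn_trans (ltn_ord j) (ltn_ord v).
have := xs01 s jV tT; have := p01 s jV; have := xtil01 s jV tT; have := xtil_le s jV tT.
by nra.
Qed.

End SNValue.

Lemma onem_expR_ge (R : realType) (Z : R) : 0 <= Z ->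
  (1 - (expR 1)^-1) * Num.min Z 1 <= 1 - expR (- Z).
Proof.
move=> Z_ge0; rewrite -expRN.
have [Z_le1|Z_gt1] := lerP Z 1.
  have := @convex_expR R (Itv01 Z_ge0 Z_le1) (-1) 0.
  rewrite !convRE /= expR0 /unstable.onem mulr0 addr0 mulr1 (_ : Z * -1 = - Z); last by ring.
  by nra.
have : expR (- Z) <= expR (-1) by rewrite ler_expR lerN2 ltW.
by lra.
Qed.

Lemma prod_onem_le_expR (R : realType) (I : finType) (z : I -> R) :
  (forall i, 0 <= z i <= 1) -> \prod_i (1 - z i) <= expR (- \sum_i z i).
Proof.
move=> z01; rewrite -sumrN expR_sum; apply: ler_prod => i _.
have := z01 i; have := expR_ge1Dx (- z i); lra.
Qed.

Lemma LPobj_le_fobj (R : realType) (V S T : nat) (lam : 'I_S -> nat -> R)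
    (p : nat -> 'I_S -> R) (x : vec R S) :
  (forall s t, (1 <= t <= T)%N -> 0 <= lam s t) ->
  (forall v s, (v < V)%N -> 0 <= p v s <= 1) ->
  (forall v s t, (v < V)%N -> (1 <= t <= T)%N -> 0 <= x v s t <= 1) ->
  (1 - (expR 1)^-1) * LPobj V T lam p x <= fobj V T lam p x.
Proof.
move=> lam_ge0 p01 x01; rewrite /LPobj /fobj mulr_sumr; apply: ler_sum_nat => t tT.
have {}tT : (1 <= t <= T)%N by rewrite -ltnS.
rewrite mulr_sumr; apply: ler_sum => s _; rewrite mulrCA ler_wpM2l ?lam_ge0 //.
have xp01 (v : 'I_V) : 0 <= x v s t * p v s <= 1.
  by have := x01 v s t (ltn_ord v) tT; have := p01 v s (ltn_ord v); nra.
apply: le_trans (onem_expR_ge _) _; first by apply: sumr_ge0 => v _; case/andP: (xp01 v).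
by rewrite lerD2l lerN2 prod_onem_le_expR.
Qed.

Section ContinuousGreedy.
Variables (R : realType) (V S T : nat) (lam : 'I_S -> nat -> R) (p : nat -> 'I_S -> R).
Variables (g : nat -> R) (m : nat).
Hypothesis m_gt0 : (0 < m)%N.

Lemma feasv_avg (ys : nat -> 'I_S -> nat -> R) :
  (forall i, (1 <= i <= m)%N -> feasv T lam g (ys i)) ->
  feasv T lam g (fun s t => \sum_(1 <= i < m.+1) ys i s t / m%:R).
Proof.
move=> ys_feas; have m_pos : (0 : R) < m%:R by rewrite ltr0n.
have avg_le1 (c : nat -> R) : (forall i, (1 <= i <= m)%N -> c i <= 1) ->
    \sum_(1 <= i < m.+1) c i / m%:R <= 1.
  move=> c_le1; rewrite -mulr_suml ler_pdivrMr // mul1r.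
  have -> : (m%:R : R) = \sum_(1 <= i < m.+1) 1 by rewrite sumr_const_nat subSS subn0.
  by apply: ler_sum_nat => i; rewrite -ltnS => /c_le1.
have y01 i s t : (1 <= i < m.+1)%N -> (1 <= t <= T)%N -> 0 <= ys i s t <= 1.
  by move=> im; apply: (ys_feas i im).1.
split=> [s t tT | t tT].
  rewrite avg_le1 ?andbT => [|i im]; last by case/andP: (y01 i s t im tT).
  rewrite big_nat_cond sumr_ge0 // => i /andP[im _].
  by rewrite divr_ge0 ?ler0n //; case/andP: (y01 i s t im tT).
rewrite (_ : \sum_(1 <= tau < t.+1) _ = \sum_(1 <= i < m.+1) (\sum_(1 <= tau < t.+1)
    \sum_(s < S) lam s tau * ys i s tau * (1 - Gc g (t - tau))) / m%:R).
  by apply: avg_le1 => i im; apply: (ys_feas i im).2.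
under eq_bigr do under eq_bigr do rewrite mulr_sumr mulr_suml.
under eq_bigr do rewrite exchange_big /=.
rewrite [LHS]exchange_big_nat /=; apply: eq_bigr => i _.
rewrite mulr_suml; apply: eq_bigr => tau _; rewrite mulr_suml.
by apply: eq_bigr => s _; ring.
Qed.

Lemma IsAA_inP (x : vec R S) : IsAA V T lam p g m x -> inP V T lam g x.
Proof.
move=> [xs [ys [xs0 [xs_step ->]]]].
have xsE i : (i <= m)%N -> forall v s t, xs i v s t = \sum_(1 <= j < i.+1) ys j v s t / m%:R.
  elim: i => [|i IH] im v s t; first by rewrite xs0 big_geq.
  have [_ _ ->] := xs_step i.+1 im.
  by rewrite /= (IH (ltnW im)) [RHS]big_nat_recr.
move=> v vV; have -> : xs m v = fun s t => \sum_(1 <= j < m.+1) ys j v s t / m%:R.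
  by apply/funext => s; apply/funext => t; rewrite xsE.
by apply: feasv_avg => i im; case: (xs_step i im) => ys_feas _ _; apply: ys_feas.
Qed.

End ContinuousGreedy.

Unset Implicit Arguments.

Theorem theorem1 (R : realType) (V S T : nat)
  (lam : 'I_S -> nat -> R) (p : nat -> 'I_S -> R) (g : nat -> R) (q : R)
  (m : nat) (xLP xAA xSQ xstar : vec R S) :
  (forall s t, (1 <= t <= T)%N -> 0 <= lam s t) ->
  (forall t, (1 <= t <= T)%N -> \sum_(s < S) lam s t <= 1) ->
  (forall v s, (v < V)%N -> 0 <= p v s <= 1) ->
  (forall i, (0 < i)%N -> 0 <= g i) ->
  (Gc g) @ \oo --> (1 : R) ->
  IsMDHR g q ->
  IsLPopt V T lam p g xLP ->
  (0 < m)%N ->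
  IsAA V T lam p g m xAA ->
  IsSQ V T lam p g xSQ ->
  IsXstar V T lam p xstar xLP xAA xSQ ->
  (2 - q)^-1 * (1 - (expR 1)^-1) * LPobj V T lam p xLP
    <= POL_SN V T lam p g xstar.
Proof.
move=> lam_ge0 lam_sum_le1 p01 g_ge0 Gc_cvg mdhr [xLP_feas _] m_gt0 AA SQ
  [xstar_cand fLP_le _ _].
have xstar_feas : inP V T lam g xstar.
  by case: xstar_cand => [->|[->|->]] //; [apply: IsAA_inP AA | move=> v /SQ[]].
have x01 x : inP V T lam g x -> forall v s t, (v < V)%N -> (1 <= t <= T)%N -> 0 <= x v s t <= 1.
  by move=> x_feas v s t vV; apply: (x_feas v vV).1.
have q_le1 := mdhr_le1 g_ge0 Gc_cvg mdhr.
have q_lt2 : 0 < 2 - q by lra.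
rewrite -mulrA ler_pdivrMl //.
apply: le_trans (LPobj_le_fobj lam_ge0 p01 (x01 _ xLP_feas)) _.
apply: le_trans fLP_le _.
apply: le_trans (fobj_le_sum_credit g lam_ge0 p01 (x01 _ xstar_feas)) _.
have := sum_sn_value_le_W lam_ge0 lam_sum_le1 p01 (x01 _ xstar_feas) g_ge0
  (Gc_le1 g_ge0 Gc_cvg) (leqnn T) (fun _ => 0%N).
rewrite subnn /= => sum_value_le_POL.
apply: le_trans (ler_wpM2l (ltW q_lt2) sum_value_le_POL); rewrite mulr_sumr.
apply: ler_sum => v _; apply: credit_le_dp_value => //.
- exact: survivalS_le g_ge0 Gc_cvg mdhr.
- exact: xstar_feas.
Qed.
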